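(* Let $G$ be a graph with vertex set $V$ partitioned into $V_1,\dots,V_k$ with no edge inside any $V_i$, let $G'$, $X,Y,U$ be as constructed in the context, and let $S=V\cup X\cup U$, $T=V\cup Y\cup U$ and $\ell=8\binom{k}{2}+2k$. If $G$ contains a clique $\{v_1,\dots,v_k\}$ with $v_i\in V_i$ for all $i$, then there is a token sliding reconfiguration sequence of length at most $\ell$ from $S$ to $T$ in $G'$.
   Context: Construction of $G'$: start with $V$. For each edge $e=\{u,v\}$ of $G$ add a vertex $x_e$ adjacent to $u$ and $v$; let $E$ be the set of all $x_e$, and for each unordered pair $\{i,j\}$, $i\ne j$, let $\mathcal{E}_{ij}$ be the set of $x_e$ with $e$ joining $V_i$ and $V_j$; label these $\binom k2$ sets by $1,\dots,\binom k2$. Add independent sets $X=\{a_1,\dots,a_{\binom k2}\}$, $Y=\{b_1,\dots,b_{\binom k2}\}$. For each label $t$ and each $x_e$ in the set labeled $t$, add a path $a_t-p-q-r-x_e$ with three new internal vertices, putting the middle vertex $q$ into $U_1$, and a path $b_t-p'-q'-r'-x_e$ with three new internal vertices, putting $q'$ into $U_2$; $U=U_1\cup U_2$. For each $v\in V$ add a new vertex $z_v$ adjacent only to $v$. A token sliding reconfiguration sequence of length $m$ from $S$ to $T$ is a sequence $S=I_0,\dots,I_m=T$ of independent sets of size $|S|$ with each $I_{j+1}=(I_j\setminus\{u\})\cup\{w\}$ for some $u\in I_j$, $w\notin I_j$, $\{u,w\}\in E(G')$. *)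

From mathcomp Require Import all_boot.
Set Implicit Arguments. Unset Strict Implicit. Unset Printing Implicit Defensive.

Section Construction.
Variables (V : finType) (adj : rel V) (k : nat) (part : V -> 'I_k).

Definition Lab := {p : {set 'I_k} | #|p| == 2}.
Definition Ed := {e : {set V} | [exists u, [exists v, adj u v && (e == [set u; v])]]}.

(* Vertices of G':  V, z_v, a_t (X), b_t (Y), x_e (E), and internal path
   vertices (s, e, i): s = false for the path a_t - p - q - r - x_e,
   s = true for b_t - p' - q' - r' - x_e; i = 0,1,2 for p,q,r. *)
Definition gV := (((V + V) + (Lab + Lab)) + (Ed + (bool * Ed * 'I_3)))%type.

Definition vV (v : V) : gV := inl (inl (inl v)).
Definition vZ (v : V) : gV := inl (inl (inr v)).
Definition vA (t : Lab) : gV := inl (inr (inl t)).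
Definition vB (t : Lab) : gV := inl (inr (inr t)).
Definition vE (e : Ed) : gV := inr (inl e).
Definition vP (s : bool) (e : Ed) (i : 'I_3) : gV := inr (inr (s, e, i)).

Definition label (e : Ed) : {set 'I_k} := part @: (val e).

Definition gadj0 (x y : gV) : bool :=
  match x, y with
  | inr (inl e), inl (inl (inl v)) => v \in val e
  | inl (inl (inr z)), inl (inl (inl v)) => z == v
  | inl (inr (inl t)), inr (inr (s, e, i)) =>
      [&& ~~ s, val t == label e & nat_of_ord i == 0]
  | inl (inr (inr t)), inr (inr (s, e, i)) =>
      [&& s, val t == label e & nat_of_ord i == 0]
  | inr (inr (s, e, i)), inr (inr (s', e', i')) =>
      [&& s == s', e == e' & (nat_of_ord i).+1 == nat_of_ord i']
  | inr (inr (s, e, i)), inr (inl e') => (e == e') && (nat_of_ord i == 2)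
  | _, _ => false
  end.

Definition gadj (x y : gV) : bool := gadj0 x y || gadj0 y x.

Definition Xset : {set gV} := [set vA t | t : Lab].
Definition Yset : {set gV} := [set vB t | t : Lab].
Definition Uset : {set gV} := [set x | [exists s, [exists e, x == vP s e (inord 1)]]].
Definition Vset : {set gV} := [set vV v | v : V].
Definition Sset : {set gV} := Vset :|: Xset :|: Uset.
Definition Tset : {set gV} := Vset :|: Yset :|: Uset.

Definition gindep (I : {set gV}) : Prop :=
  forall x y, x \in I -> y \in I -> ~~ gadj x y.

Definition slide (I J : {set gV}) : Prop :=
  exists u w, [/\ u \in I, w \notin I, gadj u w & J = (I :\ u) :|: [set w]].

Definition ts_seq (S T : {set gV}) (m : nat) : Prop :=
  exists I : nat -> {set gV},
    [/\ I 0 = S, I m = T,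
        (forall j, j <= m -> gindep (I j) /\ #|I j| = #|S|)
      & (forall j, j < m -> slide (I j) (I j.+1))].

End Construction.

From Pilot Require Import Defs.
From mathcomp Require Import all_boot zify.
Set Implicit Arguments. Unset Strict Implicit. Unset Printing Implicit Defensive.

(* Let v_1, ..., v_k be the clique. First slide the token of each v_i to its
   pendant z_(v_i) (k slides); this frees every clique vertex.  Then, for each
   label t = {i, j} with edge e = v_i v_j, consider the path
   b_t - p' - q' - r' - x_e - r - q - p - a_t, whose tokens sit on q', q and a_t:
   move them to b_t, q' and q (2 + 4 + 2 slides).  The token of q passes through
   x_e because both endpoints of e are free, and every other vertex of the path
   has no occupied neighbour outside the path.  Finally undo the first stage
   (k slides), which is legal since slides are reversible. *)

(* [==] on sums and ordinals is not reduced by [/=]; these rules expose it. *)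
Lemma sum_eqE (A B : eqType) (u v : A + B) :
  (u == v) = match u, v with
             | inl a, inl b => a == b
             | inr a, inr b => a == b
             | _, _ => false
             end.
Proof. by []. Qed.

Lemma ord_eqE n (i j : 'I_n) : (i == j) = (val i == val j).
Proof. by []. Qed.

Definition move (T : finType) (A : {set T}) (u w : T) : {set T} := A :\ u :|: [set w].

Lemma move_trans (T : finType) (A : {set T}) u w w' :
  w \notin A -> move (move A u w) w w' = move A u w'.
Proof.
move=> wA; apply/setP=> y; rewrite !inE.
by case: (eqVneq y w) => [->|] /=; rewrite ?(negbTE wA) ?andbF ?orbF.
Qed.

Section Reconfiguration.
Variables (V : finType) (adj : rel V) (k : nat) (part : V -> 'I_k).
Local Notation gV := (gV adj k).
Local Notation vV := (@vV V adj k).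
Local Notation vZ := (@vZ V adj k).
Local Notation vA := (@vA V adj k).
Local Notation vB := (@vB V adj k).
Local Notation vE := (@vE V adj k).
Local Notation vP := (@vP V adj k).
Local Notation gadj := (@gadj V adj k part).
Local Notation gindep := (@gindep V adj k part).
Local Notation slide := (@slide V adj k part).
Local Notation ts := (@ts_seq V adj k part).
Local Notation label := (@label V adj k part).

Lemma gadjC x y : gadj x y = gadj y x.
Proof. by rewrite /gadj orbC. Qed.

Lemma gadj_irr x : gadj x x = false.
Proof.
case: x => [[[v|v]|[t|t]]|[e|[[s e] i]]] //=; rewrite /gadj /gadj0 /= ?eqxx //=.
by rewrite orbb (gtn_eqF (ltnSn i)).
Qed.

Definition i0 : 'I_3 := @Ordinal 3 0 isT.
Definition i1 : 'I_3 := @Ordinal 3 1 isT.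
Definition i2 : 'I_3 := @Ordinal 3 2 isT.

Lemma gadj_vZ v x : gadj (vZ v) x -> x = vV v.
Proof.
case: x => [[[w|w]|[t|t]]|[e'|[[s' e'] i']]]; rewrite /gadj /gadj0 //= ?andbF ?orbF //.
by move/eqP->.
Qed.

Lemma gadj_vV v x : gadj (vV v) x -> x = vZ v \/ exists e, x = vE e.
Proof.
case: x => [[[w|w]|[t|t]]|[e'|[[s' e'] i']]]; rewrite /gadj /gadj0 //= ?andbF ?orbF //.
- by move/eqP->; left.
- by move=> _; right; exists e'.
Qed.

Lemma gadj_vA t x : gadj (vA t) x -> exists e, x = vP false e i0.
Proof.
case: x => [[[w|w]|[t'|t']]|[e'|[[s' e'] i']]]; rewrite /gadj /gadj0 //= ?andbF ?orbF //.
case/and3P=> hs _ /eqP hi; exists e'; case: s' hs => // _.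
by congr vP; apply/val_inj.
Qed.

Lemma gadj_vB t x : gadj (vB t) x -> exists e, x = vP true e i0.
Proof.
case: x => [[[w|w]|[t'|t']]|[e'|[[s' e'] i']]]; rewrite /gadj /gadj0 //= ?andbF ?orbF //.
case/and3P=> hs _ /eqP hi; exists e'; case: s' hs => // _.
by congr vP; apply/val_inj.
Qed.

Lemma gadj_vE e x : gadj (vE e) x ->
  (exists2 v, v \in val e & x = vV v) \/ exists s, x = vP s e i2.
Proof.
case: x => [[[v|v]|[t|t]]|[e'|[[s' e'] i']]]; rewrite /gadj /gadj0 //= ?andbF ?orbF //.
  by left; exists v.
case/andP=> /eqP <- /eqP hi; right; exists s'.
by congr vP; apply/val_inj.
Qed.

Lemma gadj_vP0 s e x : gadj (vP s e i0) x ->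
  x = vP s e i1 \/ exists2 t, val t = label e & x = if s then vB t else vA t.
Proof.
case: x => [[[v|v]|[t|t]]|[e'|[[s' e'] i']]]; rewrite /gadj /gadj0 //= ?andbF ?orbF //.
- by case/and3P=> hs /eqP ht _; right; exists t; case: s hs.
- by case/and3P=> hs /eqP ht _; right; exists t; case: s hs.
case/and3P=> /eqP <- /eqP <- /eqP hi.
by left; congr vP; apply/val_inj.
Qed.

Lemma gadj_vP1 s e x : gadj (vP s e i1) x -> x = vP s e i0 \/ x = vP s e i2.
Proof.
case: x => [[[v|v]|[t|t]]|[e'|[[s' e'] i']]]; rewrite /gadj /gadj0 //= ?andbF ?orbF //.
case/orP=> /and3P[/eqP <- /eqP <- /eqP hi].
  by right; congr vP; apply/val_inj.
by left; congr vP; apply/val_inj; case: hi.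
Qed.

Lemma gadj_vP2 s e x : gadj (vP s e i2) x -> x = vP s e i1 \/ x = vE e.
Proof.
case: x => [[[v|v]|[t|t]]|[e'|[[s' e'] i']]]; rewrite /gadj /gadj0 //= ?andbF ?orbF //.
  by rewrite eqxx andbT => /eqP <-; right.
case/orP=> /and3P[/eqP <- /eqP <- /eqP hi].
  by move: (ltn_ord i'); rewrite -hi.
by left; congr vP; apply/val_inj; case: hi.
Qed.

Lemma slide_sym I J : slide I J -> slide J I.
Proof.
case=> u [w [uI wI uw ->]]; have wu : w != u by apply/eqP=> wu; rewrite wu gadj_irr in uw.
exists w, u; split; last 2 first.
- by rewrite gadjC.
- apply/setP=> y; rewrite !inE.
  case: (eqVneq y u) => [->|yu]; first by rewrite uI eq_sym (negbTE wu).
  by case: (eqVneq y w) => [->|] /=; rewrite ?(negbTE wI) ?andbF ?orbF.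
- by rewrite !inE eqxx orbT.
- by rewrite !inE eqxx eq_sym (negbTE wu).
Qed.

Lemma ts_seq0 S : gindep S -> ts S S 0.
Proof. by move=> indS; exists (fun _ => S); split=> // j _. Qed.

Lemma ts_seq_last S T m : ts S T m -> gindep T /\ #|T| = #|S|.
Proof. by case=> I [_ <- Iok _]; exact: Iok. Qed.

Lemma ts_seq1 I u w : gindep I -> u \in I -> w \notin I -> gadj u w ->
  (forall x, x \in I -> gadj w x -> x = u) -> ts I (move I u w) 1.
Proof.
move=> indI uI wI uw wnbr.
have indJ : gindep (move I u w).
  have away x : x \in I -> x != u -> ~~ gadj w x.
    by move=> xI; apply: contra => /(wnbr _ xI) ->.
  move=> x y; rewrite !inE.
  case/orP=> [/andP[xu xI]|/eqP->]; case/orP=> [/andP[yu yI]|/eqP->].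
  - exact: indI.
  - by rewrite gadjC away.
  - exact: away.
  - by rewrite gadj_irr.
have cardJ : #|move I u w| = #|I|.
  by rewrite /move setUC cardsU1 in_setD1 (negbTE wI) andbF (cardsD1 u I) uI.
exists (fun j => if j is 0 then I else move I u w); split=> //.
  by case=> [|[|//]] _.
by case=> // _; exists u, w.
Qed.

Lemma ts_seq_cat S T U m n : ts S T m -> ts T U n -> ts S U (m + n).
Proof.
move=> [I [I0 Im Iok Isl]] [J [J0 Jn Jok Jsl]].
have [_ cardT] := Iok m (leqnn m); rewrite Im in cardT.
pose K j := if j <= m then I j else J (j - m).
have KJ j : m <= j -> K j = J (j - m).
  rewrite /K leq_eqVlt => /orP[/eqP<-|ltmj]; first by rewrite leqnn subnn Im J0.
  by rewrite leqNgt ltmj.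
exists K; split.
- by rewrite /K leq0n.
- by rewrite KJ ?leq_addr // addKn.
- move=> j hj; case: (leqP j m) => hjm; first by rewrite /K hjm; exact: Iok.
  have [indJ cardJ] : gindep (J (j - m)) /\ #|J (j - m)| = #|T| by apply: Jok; lia.
  by rewrite KJ 1?ltnW // cardJ.
- move=> j hj; case: (ltnP j m) => hjm; first by rewrite /K hjm ltnW //; exact: Isl.
  rewrite !KJ 1?leqW // subSn //; apply: Jsl; lia.
Qed.

Lemma ts_seq_walk S I m u w w' : ts S (move I u w) m -> w \notin I ->
  w' \notin move I u w -> gadj w w' ->
  (forall x, x \in move I u w -> gadj w' x -> x = w) -> ts S (move I u w') m.+1.
Proof.
move=> hS wI w'I ww' w'nbr; rewrite -[move I u w'](move_trans _ _ wI) -[m.+1]addn1.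
apply: (ts_seq_cat hS); apply: ts_seq1 w'I ww' w'nbr; first by case: (ts_seq_last hS).
by rewrite !inE eqxx orbT.
Qed.

Lemma ts_seq_rev S T m : ts S T m -> ts T S m.
Proof.
move=> [I [I0 Im Iok Isl]].
have [_ cardT] := Iok m (leqnn m); rewrite Im in cardT.
exists (fun j => I (m - j)); split; rewrite ?subn0 ?subnn //.
  by move=> j _; have [indI cardI] := Iok (m - j) (leq_subr _ _); rewrite cardI cardT.
move=> j hj; apply: slide_sym; have -> : m - j = (m - j.+1).+1 by lia.
apply: Isl; lia.
Qed.

(* W: the vertices of G whose token has been lifted to their pendant z_v;
   L: the labels t whose token has moved from a_t to b_t.
   The tokens of U sit on the middle vertices q, q' of the paths. *)
Definition occ (W : {set V}) (L : seq (Lab k)) (x : gV) : bool :=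
  match x with
  | inl (inl (inl v)) => v \notin W
  | inl (inl (inr v)) => v \in W
  | inl (inr (inl t)) => t \notin L
  | inl (inr (inr t)) => t \in L
  | inr (inl _) => false
  | inr (inr (_, _, i)) => i == i1
  end.

Definition config W L : {set gV} := [set x | occ W L x].

Ltac config_simpl :=
  rewrite /move /config ?inE; unfold Defs.vV, Defs.vZ, Defs.vA, Defs.vB, Defs.vE, Defs.vP;
  rewrite /= ?sum_eqE ?xpair_eqE ?ord_eqE /= ?eqxx ?andbT ?andbF ?orbT ?orbF.

Lemma config_indep W L : gindep (config W L).
Proof.
move=> x y; rewrite !inE => hx hy; apply/negP => xy; move: xy hx hy.
case: x => [[[v|v]|[t|t]]|[e|[[s e] i]]] //=.
- by case/gadj_vV=> [->|[e ->]] //= /negbTE ->.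
- by move/gadj_vZ=> -> /= ->.
- by case/gadj_vA=> e ->.
- by case/gadj_vB=> e ->.
- by move=> + /eqP hi; rewrite hi => /gadj_vP1 [->|->].
Qed.

Lemma ts_config_lift (W : {set V}) L v : v \notin W -> ts (config W L) (config (v |: W) L) 1.
Proof.
move=> vW; have -> : config (v |: W) L = move (config W L) (vV v) (vZ v).
  apply/setP=> y; case: y => [[[w|w]|[t|t]]|[e|[[s e] j]]]; config_simpl => //.
  - by rewrite in_setU1 negb_or.
  - by rewrite in_setU1 orbC.
apply: ts_seq1; first exact: config_indep.
- by config_simpl.
- by config_simpl.
- by rewrite /gadj /gadj0 /= eqxx.
- by move=> x _ /gadj_vZ.
Qed.

Lemma ts_config_lift_seq L s :
  uniq s -> ts (config set0 L) (config [set:: s] L) (size s).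
Proof.
elim: s => [_|v s IHs /= /andP[vs us]]; first exact/ts_seq0/config_indep.
rewrite set_cons -[(size s).+1]addn1; apply: (ts_seq_cat (IHs us)).
by apply: ts_config_lift; rewrite inE.
Qed.

Section Transfer.
Variables (W : {set V}) (L : seq (Lab k)) (t : Lab k) (e : Ed adj).
Hypotheses (tL : t \notin L) (label_e : label e = val t) (eW : val e \subset W).

Local Notation a := (vA t).
Local Notation b := (vB t).
Local Notation x_e := (vE e).
Local Notation p := (vP false e i0).
Local Notation q := (vP false e i1).
Local Notation r := (vP false e i2).
Local Notation p' := (vP true e i0).
Local Notation q' := (vP true e i1).
Local Notation r' := (vP true e i2).

Local Notation I1 := (move (config W L) q' b).
Local Notation I2 := (move I1 q q').

Let label_inj t' : val t' = label e -> t' = t.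
Proof. by rewrite label_e => /val_inj. Qed.

Lemma ts_transfer_b : ts (config W L) I1 2.
Proof.
have h1 : ts (config W L) (move (config W L) q' p') 1.
  apply: ts_seq1; first exact: config_indep.
  - by config_simpl.
  - by config_simpl.
  - by rewrite /gadj /gadj0 /= !eqxx.
  - move=> x xI /gadj_vP0 [-> //|[t' /label_inj -> xE]]; move: xI; rewrite {}xE.
    by config_simpl; rewrite (negbTE tL).
apply: (ts_seq_walk h1).
- by config_simpl.
- by config_simpl; rewrite (negbTE tL).
- by rewrite /gadj /gadj0 /= label_e !eqxx.
- move=> x xI /gadj_vB [e' xE]; move: xI; rewrite {}xE.
  by config_simpl => /eqP ->.
Qed.

Lemma ts_transfer_e : ts I1 I2 4.
Proof.
have h1 : ts I1 (move I1 q r) 1.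
  apply: ts_seq1; first exact: (ts_seq_last ts_transfer_b).1.
  - by config_simpl.
  - by config_simpl.
  - by rewrite /gadj /gadj0 /= !eqxx.
  - by move=> x xI /gadj_vP2 [-> //|xE]; move: xI; rewrite {}xE; config_simpl.
have h2 : ts I1 (move I1 q x_e) 2.
  apply: (ts_seq_walk h1).
  - by config_simpl.
  - by config_simpl.
  - by rewrite /gadj /gadj0 /= !eqxx.
  move=> x xI /gadj_vE [[v ve xE]|[s xE]]; move: xI; rewrite {}xE; config_simpl.
    by rewrite (subsetP eW v ve).
  by case: s.
have h3 : ts I1 (move I1 q r') 3.
  apply: (ts_seq_walk h2).
  - by config_simpl.
  - by config_simpl.
  - by rewrite /gadj /gadj0 /= !eqxx.
  - by move=> x xI /gadj_vP2 [xE|-> //]; move: xI; rewrite {}xE; config_simpl.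
apply: (ts_seq_walk h3).
- by config_simpl.
- by config_simpl.
- by rewrite /gadj /gadj0 /= !eqxx.
- by move=> x xI /gadj_vP1 [xE|-> //]; move: xI; rewrite {}xE; config_simpl.
Qed.

Lemma ts_transfer_a : ts I2 (move I2 a q) 2.
Proof.
have h1 : ts I2 (move I2 a p) 1.
  apply: ts_seq1; first exact: (ts_seq_last ts_transfer_e).1.
  - by config_simpl; rewrite (negbTE tL).
  - by config_simpl.
  - by rewrite /gadj /gadj0 /= label_e !eqxx.
  - move=> x xI /gadj_vP0 [xE|[t' /label_inj -> -> //]].
    by move: xI; rewrite {}xE; config_simpl.
apply: (ts_seq_walk h1).
- by config_simpl.
- by config_simpl.
- by rewrite /gadj /gadj0 /= !eqxx.
- by move=> x xI /gadj_vP1 [-> //|xE]; move: xI; rewrite {}xE; config_simpl.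
Qed.

Lemma transfer_config : move I2 a q = config W (t :: L).
Proof.
apply/setP=> y; case: y => [[[v|v]|[t'|t']]|[e'|[[s e'] i]]]; config_simpl => //.
- by rewrite negb_or.
- by rewrite orbC.
- by case: s; case: (e' == e); case: (val i == 1).
Qed.

Lemma ts_config_transfer : ts (config W L) (config W (t :: L)) 8.
Proof.
rewrite -transfer_config.
exact: ts_seq_cat (ts_seq_cat ts_transfer_b ts_transfer_e) ts_transfer_a.
Qed.

End Transfer.

Lemma ts_config_transfer_seq (W : {set V}) s :
  (forall t : Lab k, exists2 e : Ed adj, label e = val t & val e \subset W) ->
  uniq s -> ts (config W [::]) (config W s) (8 * size s).
Proof.
move=> edge_in; elim: s => [_|t s IHs /= /andP[ts us]]; first exact/ts_seq0/config_indep.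
have [e le eW] := edge_in t.
by rewrite mulnS addnC; apply: ts_seq_cat (IHs us) (ts_config_transfer ts le eW).
Qed.

Lemma in_Vset y : (y \in Vset adj k) = if y is inl (inl (inl _)) then true else false.
Proof.
case: y => [[[v|v]|[t|t]]|[e|[[s e] i]]]; first by rewrite imset_f.
all: by apply/negbTE/imsetP => -[].
Qed.

Lemma in_Xset y : (y \in Xset adj k) = if y is inl (inr (inl _)) then true else false.
Proof.
case: y => [[[v|v]|[t|t]]|[e|[[s e] i]]]; try by rewrite imset_f.
all: by apply/negbTE/imsetP => -[].
Qed.

Lemma in_Yset y : (y \in Yset adj k) = if y is inl (inr (inr _)) then true else false.
Proof.
case: y => [[[v|v]|[t|t]]|[e|[[s e] i]]]; try by rewrite imset_f.
all: by apply/negbTE/imsetP => -[].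
Qed.

Lemma in_Uset y : (y \in Uset adj k) = if y is inr (inr (_, _, i)) then i == i1 else false.
Proof.
have inord1 : inord 1 = i1 by apply/val_inj; rewrite /= inordK.
rewrite inE; case: y => [[[v|v]|[t|t]]|[e|[[s e] i]]].
all: try by apply/negbTE/existsP => -[s' /existsP [e' /eqP]].
apply/existsP/eqP => [[s' /existsP [e' /eqP [_ _ ->]]] // | ->].
by exists s; apply/existsP; exists e; rewrite inord1.
Qed.

Lemma Sset_config : Sset adj k = config set0 [::].
Proof.
apply/setP=> y; rewrite !in_setU in_Vset in_Xset in_Uset.
by case: y => [[[v|v]|[t|t]]|[e|[[s e] i]]]; rewrite inE /= ?inE.
Qed.

Lemma Tset_config : Tset adj k = config set0 (enum {: Lab k}).
Proof.
apply/setP=> y; rewrite !in_setU in_Vset in_Yset in_Uset.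
by case: y => [[[v|v]|[t|t]]|[e|[[s e] i]]]; rewrite inE /= ?inE ?mem_enum.
Qed.

Lemma card_Lab : #|{: Lab k}| = 'C(k, 2).
Proof.
rewrite card_sig -[k in 'C(k, 2)]card_ord -card_draws.
by apply: eq_card => x; rewrite !inE.
Qed.

Section Clique.
Variable f : 'I_k -> V.
Hypotheses (f_part : cancel f part) (f_clique : forall i j, i != j -> adj (f i) (f j)).

Local Notation clique := [set:: map f (enum 'I_k)].

Lemma clique_edge (t : Lab k) :
  exists2 e : Ed adj, label e = val t & val e \subset clique.
Proof.
have /cards2P [i [j [ij tE]]] := valP t.
have edge_ft : [exists u, exists v, adj u v && (f @: val t == [set u; v])].
  apply/existsP; exists (f i); apply/existsP; exists (f j).
  by rewrite f_clique // tE imsetU1 imset_set1 eqxx.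
exists (exist _ (f @: val t) edge_ft) => /=.
  by rewrite /label /= -imset_comp (eq_imset _ f_part) imset_id.
by apply/subsetP=> _ /imsetP[i' _ ->]; rewrite inE map_f ?mem_enum.
Qed.

Lemma ts_Sset_Tset : ts (Sset adj k) (Tset adj k) (k + 8 * 'C(k, 2) + k).
Proof.
have clique_uniq : uniq (map f (enum 'I_k)).
  by rewrite map_inj_uniq ?enum_uniq //; exact: can_inj f_part.
have lift L : ts (config set0 L) (config clique L) k.
  by have := ts_config_lift_seq L clique_uniq; rewrite size_map size_enum_ord.
have transfer := ts_config_transfer_seq clique_edge (enum_uniq {: Lab k}).
rewrite Sset_config Tset_config -card_Lab cardE.
exact: ts_seq_cat (ts_seq_cat (lift [::]) transfer) (ts_seq_rev (lift _)).
Qed.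

End Clique.
End Reconfiguration.

Theorem lemma5p2 (V : finType) (adj : rel V) (k : nat) (part : V -> 'I_k)
  (adj_sym : symmetric adj) (adj_irr : irreflexive adj)
  (hpart : forall u v, adj u v -> part u != part v)
  (hclique : exists f : 'I_k -> V,
      (forall i, part (f i) = i) /\ (forall i j, i != j -> adj (f i) (f j))) :
  exists m, m <= 8 * 'C(k, 2) + 2 * k /\
    @ts_seq V adj k part (@Sset V adj k) (@Tset V adj k) m.
Proof.
case: hclique => f [f_part f_clique].
exists (k + 8 * 'C(k, 2) + k); split; first lia.
exact: ts_Sset_Tset f_part f_clique.
Qed.
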